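(* Under the setting below with the randomized sampling requirement, assume additionally that $G$ is convex and each $f_i$ is $\mu_{f_i}$-strongly convex ($\mu_{f_i}>0$). Let $\bm x^\star$ be the unique minimizer of $\Phi$, $\mu_F:=\frac1N\operatorname{blockdiag}(\mu_{f_1}I_{n_1},\dots,\mu_{f_N}I_{n_N})$, $\xi_i:=\frac{N-\gamma_iL_{f_i}}{N}$, and $c:=\min_{i\in[N]}\{\xi_ip_i/\gamma_i\}\,\big/\,\max_{i\in[N]}\{(N-\gamma_i\mu_{f_i})/(\gamma_i^2\mu_{f_i})\}$. Then for all $k$: $\mathbb E_k[\Phi^{\mathrm{FB}}_\Gamma(\bm x^{k+1})-\min\Phi]\le(1-c)(\Phi^{\mathrm{FB}}_\Gamma(\bm x^k)-\min\Phi)$, $\mathbb E[\Phi(\bm z^k)-\min\Phi]\le(\Phi(\bm x^0)-\min\Phi)(1-c)^k$, and $\frac12\mathbb E[\|\bm z^k-\bm x^\star\|^2_{\mu_F}]\le(\Phi(\bm x^0)-\min\Phi)(1-c)^k$. Moreover, assuming $\kappa_i:=L_{f_i}/\mu_{f_i}>1$ for all $i$, if the stepsizes and minimal sampling probabilities are chosen as $\gamma_i=\frac{N}{\mu_{f_i}}(1-\sqrt{1-1/\kappa_i})$ and $p_i=\frac{(\sqrt{\kappa_i}+\sqrt{\kappa_i-1})^2}{\sum_{j=1}^N(\sqrt{\kappa_j}+\sqrt{\kappa_j-1})^2}$, then the three inequalities hold with $c=1\big/\sum_{i=1}^N(\sqrt{\kappa_i}+\sqrt{\kappa_i-1})^2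$.
   Context: Setting: $N\ge1$, $n=\sum_{i=1}^N n_i$, $\bm x=(x_1,\dots,x_N)$ with $x_i\in\mathbb R^{n_i}$; $\Phi=F+G$ with $F(\bm x)=\frac1N\sum_i f_i(x_i)$, each $f_i:\mathbb R^{n_i}\to\mathbb R$ differentiable with $L_{f_i}$-Lipschitz gradient, $G:\mathbb R^n\to\mathbb R\cup\{+\infty\}$ proper lsc, $\arg\min\Phi\ne\emptyset$. $\gamma_i\in(0,N/L_{f_i})$, $\Gamma=\operatorname{blockdiag}(\gamma_1I_{n_1},\dots,\gamma_NI_{n_N})$, $\|x\|_V^2=\langle x,Vx\rangle$, $\operatorname{prox}_G^{V}(u)=\arg\min_w\{G(w)+\frac12\|w-u\|_V^2\}$, $\mathbf T(\bm x)=\operatorname{prox}_G^{\Gamma^{-1}}(\bm x-\Gamma\nabla F(\bm x))$. Forward-backward envelope: $\Phi^{\mathrm{FB}}_\Gamma(\bm x):=\inf_{\bm w}\{F(\bm x)+\langle\nabla F(\bm x),\bm w-\bm x\rangle+G(\bm w)+\frac12\|\bm w-\bm x\|^2_{\Gamma^{-1}}\}$. Algorithm BC: given $\bm x^0\in\mathbb R^n$, for $k=0,1,\dots$: pick $\bm z^k\in\mathbf T(\bm x^k)$; select $I^{k+1}\subseteq[N]$; set $x_i^{k+1}=z_i^k$ for $i\in I^{k+1}$ and $x_i^{k+1}=x_i^k$ otherwise. Randomized sampling requirement: there exist $p_1,\dots,p_N>0$ such that at every iteration, conditionally on the past, $\mathbb P(i\in I^{k+1})\ge p_i$ for every $i$.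 $\mathbb E_k$ denotes expectation conditional on the history up to iteration $k$; $\mathbb E$ is unconditional expectation. *)

From HB Require Import structures.
From Stdlib Require Import Reals ClassicalEpsilon.
From mathcomp Require Import all_boot.
Set Implicit Arguments. Unset Strict Implicit. Unset Printing Implicit Defensive.
Local Open Scope R_scope.

Lemma Rplus_assoc' : associative Rplus.
Proof. by move=> a b c; rewrite Rplus_assoc. Qed.
HB.instance Definition _ := Monoid.isComLaw.Build R R0 Rplus Rplus_assoc' Rplus_comm Rplus_0_l.

Notation "\sumR_ ( i : T ) F" := (\big[Rplus/R0]_(i : T) F)
  (at level 41, F at level 41, i at level 50) : R_scope.
Notation "\sumR_ ( i < n ) F" := (\big[Rplus/R0]_(i < n) F)
  (at level 41, F at level 41, i, n at level 50) : R_scope.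

(** min / max of a real family indexed by 'I_N (meaningful for N >= 1) *)
Definition minI (N : nat) (a : 'I_N -> R) : R :=
  match map a (enum 'I_N) with [::] => 0 | x :: s => foldr Rmin x s end.
Definition maxI (N : nat) (a : 'I_N -> R) : R :=
  match map a (enum 'I_N) with [::] => 0 | x :: s => foldr Rmax x s end.

Definition Blk (d : nat) := 'I_d -> R.
Definition ipB d (u v : Blk d) : R := \sumR_(j < d) (u j * v j).
Definition normB d (u : Blk d) : R := sqrt (ipB u u).
Definition subB d (u v : Blk d) : Blk d := fun j => u j - v j.
Definition combB d (t : R) (u v : Blk d) : Blk d := fun j => t * u j + (1 - t) * v j.

Definition has_gradient d (f : Blk d -> R) (g : Blk d -> Blk d) : Prop :=
  forall x eps, 0 < eps -> exists delta, 0 < delta /\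
    forall y, normB (subB y x) < delta ->
      Rabs (f y - f x - ipB (g x) (subB y x)) <= eps * normB (subB y x).

Definition lipschitz_grad d (g : Blk d -> Blk d) (L : R) : Prop :=
  forall x y, normB (subB (g x) (g y)) <= L * normB (subB x y).

Definition strongly_convex d (f : Blk d -> R) (mu : R) : Prop :=
  forall x y t, 0 <= t <= 1 ->
    f (combB t x y) <= t * f x + (1 - t) * f y - mu / 2 * t * (1 - t) * (normB (subB x y))^2.

Definition X (N : nat) (nN : 'I_N -> nat) := forall i : 'I_N, Blk (nN i).

Section Prod.
Variables (N : nat) (nN : 'I_N -> nat).
Definition ipX (u v : X nN) : R := \sumR_(i : 'I_N) ipB (u i) (v i).
(* ||u||_V^2 for V = blockdiag(w_1 I_{n_1},...,w_N I_{n_N}) *)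
Definition wnorm2 (w : 'I_N -> R) (u : X nN) : R :=
  \sumR_(i : 'I_N) (w i * ipB (u i) (u i)).
Definition distX (u v : X nN) : R := sqrt (ipX (fun i => subB (u i) (v i)) (fun i => subB (u i) (v i))).
Definition subX (u v : X nN) : X nN := fun i => subB (u i) (v i).
Definition combX (t : R) (u v : X nN) : X nN := fun i => combB t (u i) (v i).
Definition affX (u : X nN) (w : 'I_N -> R) (v : X nN) : X nN :=
  fun i j => u i j + w i * v i j.   (* u + W v with W block-diagonal *)
End Prod.

(** Extended-real-valued G : R^n -> R U {+oo}, given by its (effective)
    domain dom and its finite values g on dom (G = +oo outside dom). *)
Section ExtG.
Variables (N : nat) (nN : 'I_N -> nat) (dom : X nN -> Prop) (g : X nN -> R).
(* "G y > t" *)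
Definition G_above (y : X nN) (t : R) : Prop := ~ dom y \/ t < g y.
Definition G_proper : Prop := exists x, dom x.
Definition G_lsc : Prop :=
  forall x t, G_above x t -> exists delta, 0 < delta /\
    forall y, distX y x < delta -> G_above y t.
Definition G_convex : Prop :=
  forall x y t, dom x -> dom y -> 0 <= t <= 1 ->
    dom (combX t x y) /\ g (combX t x y) <= t * g x + (1 - t) * g y.
Definition in_prox (v : 'I_N -> R) (u w : X nN) : Prop :=
  dom w /\ forall w', dom w' ->
    g w + / 2 * wnorm2 v (subX w u) <= g w' + / 2 * wnorm2 v (subX w' u).
End ExtG.

Definition is_glb (S : R -> Prop) (v : R) : Prop :=
  (forall y, S y -> v <= y) /\ (forall u, (forall y, S y -> u <= y) -> u <= v).
Definition Rinf (S : R -> Prop) : R := epsilon (inhabits 0) (is_glb S).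

Section Problem.
Variables (N : nat) (nN : 'I_N -> nat)
  (f : forall i : 'I_N, Blk (nN i) -> R)
  (gf : forall i : 'I_N, Blk (nN i) -> Blk (nN i))
  (dom : X nN -> Prop) (g : X nN -> R)
  (gamma : 'I_N -> R).

Definition Fx (x : X nN) : R := / INR N * \sumR_(i : 'I_N) (@f i (x i)).
Definition gradF (x : X nN) : X nN := fun i j => / INR N * @gf i (x i) j.
(* Phi = F + G, on dom G *)
Definition PhiR (x : X nN) : R := Fx x + g x.
Definition Gamma_inv : 'I_N -> R := fun i => / gamma i.
Definition in_T (x z : X nN) : Prop :=
  in_prox dom g Gamma_inv (affX x (fun i => - gamma i) (gradF x)) z.
Definition FBE (x : X nN) : R :=
  Rinf (fun v => exists w, dom w /\
    v = Fx x + ipX (gradF x) (subX w x) + g w + / 2 * wnorm2 Gamma_inv (subX w x)).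

(** ---- algorithm BC, randomized: histories of sampled sets ----
   A history h = [:: I^k; ...; I^1] (most recent first); D h is the
   conditional distribution of I^{k+1} given the history h.  *)
Definition history := seq {set 'I_N}.
Definition update (x z : X nN) (A : {set 'I_N}) : X nN :=
  fun i => if i \in A then z i else x i.
Fixpoint traj (x0 : X nN) (z : history -> X nN) (h : history) : X nN :=
  match h with
  | [::] => x0
  | A :: h' => update (traj x0 z h') (z h') A
  end.
(* Exp k G h = E[ G(history after k further steps) | history h ] *)
Fixpoint Exp (D : history -> {set 'I_N} -> R) (k : nat) (G : history -> R)
  (h : history) : R :=
  match k with
  | O => G h
  | S k' => \sumR_(A : {set 'I_N}) (D h A * Exp D k' G (A :: h))
  end.
Definition sampling_ok (D : history -> {set 'I_N} -> R) (p : 'I_N -> R) : Prop :=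
  forall h, (forall A, 0 <= D h A) /\ \sumR_(A : {set 'I_N}) D h A = 1 /\
    forall i, p i <= \sumR_(A : {set 'I_N}) (if i \in A then D h A else 0).

Definition BC_rates (D : history -> {set 'I_N} -> R) (x0 : X nN)
  (z : history -> X nN) (xstar : X nN) (mu : 'I_N -> R) (c : R) : Prop :=
  (forall h : history,
     \sumR_(A : {set 'I_N}) (D h A * (FBE (traj x0 z (A :: h)) - PhiR xstar))
       <= (1 - c) * (FBE (traj x0 z h) - PhiR xstar)) /\
  (dom x0 -> forall k,
     Exp D k (fun h => PhiR (z h) - PhiR xstar) [::]
       <= (PhiR x0 - PhiR xstar) * (1 - c) ^ k) /\
  (dom x0 -> forall k,
     / 2 * Exp D k (fun h => wnorm2 (fun i => mu i / INR N) (subX (z h) xstar)) [::]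
       <= (PhiR x0 - PhiR xstar) * (1 - c) ^ k).
End Problem.

(** The proof follows the forward-backward envelope.  For [z in T x] the
    envelope equals the quadratic model [model x z]
    [= F x + <grad F x, z - x> + G z + |z - x|^2_{Gamma^-1} / 2],
    and block by block the model is squeezed between
    - the descent lemma ([L]-smoothness): updating the blocks in [A] lowers
      the envelope by [xi_i / (2 gamma_i) |z_i - x_i|^2] for each [i] in [A]
      (sufficient decrease), and
    - strong convexity plus the proximal three-point inequality: the envelope
      gap is at most [sum_i b_i / 2 |z_i - x_i|^2] (error bound).
    Averaging the decrease over the sampling ([P(i in A) >= p_i]) and
    comparing it with the error bound gives the one-step contraction with any
    [c] such that [c b_i <= a_i = xi_i p_i / gamma_i]; iterating it yields the
    bounds on [Phi(z^k)] and, by quadratic growth of [Phi] around its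
    minimizer, on [|z^k - x*|^2_{mu_F}].  The theorem follows by checking
    [c b_i <= a_i] for [c = min a / max b] and for the tuned parameters.
    Trivial (zero-dimensional) blocks are handled separately. *)

From Stdlib Require Import Reals Lra Psatz ClassicalEpsilon FunctionalExtensionality.
From mathcomp Require Import all_boot.
Local Open Scope R_scope.
Set Implicit Arguments. Unset Strict Implicit.

Section FiniteSums.
Variable I : finType.
Implicit Types F G : I -> R.

Lemma sumR_le F G : (forall i, F i <= G i) -> \sumR_(i : I) F i <= \sumR_(i : I) G i.
Proof. by move=> H; apply: (big_ind2 (fun a b => a <= b)) => //; [lra | move=> *; lra]. Qed.

Lemma sumR_scal c F : \sumR_(i : I) (c * F i) = c * \sumR_(i : I) F i.
Proof. by apply: (big_ind2 (fun a b => a = c * b)) => //; [ring | move=> a b x y -> ->; ring]. Qed.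

Lemma sumR_add F G : \sumR_(i : I) (F i + G i) = \sumR_(i : I) F i + \sumR_(i : I) G i.
Proof. exact: big_split. Qed.

Lemma sumR_sub F G : \sumR_(i : I) (F i - G i) = \sumR_(i : I) F i - \sumR_(i : I) G i.
Proof. by apply: (big_ind3 (fun a b c => a = b - c)) => //; [ring | move=> ? ? ? ? ? ? -> ->; ring]. Qed.

Lemma sumR_ge0 F : (forall i, 0 <= F i) -> 0 <= \sumR_(i : I) F i.
Proof. by move=> H; apply: (big_ind (fun a => 0 <= a)) => //; [lra | move=> *; lra]. Qed.

Lemma sumR_term F i0 : (forall i, 0 <= F i) -> F i0 <= \sumR_(i : I) F i.
Proof.
move=> H; rewrite (bigD1 i0) //=.
have : 0 <= \big[Rplus/R0]_(i | i != i0) F i.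
  by apply: (big_ind (fun a => 0 <= a)) => //; [lra | move=> *; lra].
lra.
Qed.
End FiniteSums.

(** Instances over ordinals, stated with the [i < n] binder so that rewriting
    produces sums that are syntactically identical to those in the goals. *)
Lemma sumR_add_ord n (F G : 'I_n -> R) :
  \sumR_(i < n) (F i + G i) = \sumR_(i < n) F i + \sumR_(i < n) G i.
Proof. exact: sumR_add. Qed.

Lemma sumR_sub_ord n (F G : 'I_n -> R) :
  \sumR_(i < n) (F i - G i) = \sumR_(i < n) F i - \sumR_(i < n) G i.
Proof. exact: sumR_sub. Qed.

Lemma sumR_scal_ord n c (F : 'I_n -> R) : \sumR_(i < n) (c * F i) = c * \sumR_(i < n) F i.
Proof. exact: sumR_scal. Qed.

Lemma le_eps A B C : (forall e, 0 < e <= 1 -> A <= B + e * C) -> A <= B.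
Proof.
move=> H; apply: Rnot_lt_le => hlt.
set e := Rmin 1 ((A - B) / (2 * (Rabs C + 1))).
have hC := Rabs_pos C.
have hq : 0 < (A - B) / (2 * (Rabs C + 1)) by apply: Rdiv_lt_0_compat; lra.
have he : 0 < e by apply: Rmin_glb_lt; lra.
have he2 : e * (2 * (Rabs C + 1)) <= A - B.
  have := Rmult_le_compat_r (2 * (Rabs C + 1)) _ _ ltac:(lra)
    (Rmin_r 1 ((A - B) / (2 * (Rabs C + 1)))).
  by rewrite -/e /Rdiv Rmult_assoc Rinv_l; lra.
have := H e (conj he (Rmin_l _ _)).
have : e * C <= e * Rabs C by apply: Rmult_le_compat_l; [lra | apply: Rle_abs].
nra.
Qed.

Lemma deriv_chord_bound (phi : R -> R) G B C : derivable_pt_lim phi 0 G ->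
  (forall t, 0 < t <= 1 -> phi t - phi 0 <= t * B + t * t * C) -> G <= B.
Proof.
move=> hd hchord; apply: (le_eps (C := Rabs C + 1)) => e [he0 he1].
have [del hdel] := hd e he0.
set t := Rmin e (del / 2).
have hdel0 := cond_pos del.
have ht0 : 0 < t by apply: Rmin_glb_lt; lra.
have hte : t <= e := Rmin_l _ _.
have htd : t < del by apply: Rle_lt_trans (Rmin_r _ _) _; lra.
have habs_t : Rabs t < del by rewrite Rabs_pos_eq; lra.
have := hdel t (Rgt_not_eq _ _ ht0) habs_t.
rewrite Rplus_0_l => habs.
have hslope : (phi t - phi 0) / t <= B + t * C.
  have -> : B + t * C = (t * B + t * t * C) / t by field; lra.
  apply: Rmult_le_compat_r; [apply/Rlt_le/Rinv_0_lt_compat; lra | apply: hchord; lra].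
have hgap : G - (phi t - phi 0) / t < e.
  by apply: Rle_lt_trans habs; rewrite -Rabs_Ropp; apply: Rle_trans (Rle_abs _); lra.
have : t * C <= e * Rabs C.
  apply: Rle_trans (Rmult_le_compat_l _ _ _ (Rlt_le _ _ ht0) (Rle_abs C)) _.
  by apply: Rmult_le_compat_r; [apply: Rabs_pos | lra].
lra.
Qed.

Section Block.
Variable d : nat.
Implicit Types u v w a y dd : Blk d.

Lemma ipB_ge0 u : 0 <= ipB u u.
Proof. by apply: sumR_ge0 => j; nra. Qed.

Lemma normB_sq u : normB u * normB u = ipB u u.
Proof. exact/sqrt_sqrt/ipB_ge0. Qed.

Lemma ipB_scal_l c u v : ipB (fun j => c * u j) v = c * ipB u v.
Proof. by rewrite /ipB -sumR_scal; apply: eq_bigr => j _; ring. Qed.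

Lemma ipB_scal_r c u v : ipB u (fun j => c * v j) = c * ipB u v.
Proof. by rewrite /ipB -sumR_scal; apply: eq_bigr => j _; ring. Qed.

Lemma ipB_sub_l u v w : ipB (subB u v) w = ipB u w - ipB v w.
Proof. by rewrite /ipB -sumR_sub; apply: eq_bigr => j _; rewrite /subB; ring. Qed.

Lemma ipB_sub_self u v : ipB u (subB v v) = 0.
Proof. by apply: big1 => j _; rewrite /subB; ring. Qed.

Lemma ipB_dim0 u v : d = 0%nat -> ipB u v = 0.
Proof.
move=> hd; apply: big1 => j _; exfalso.
by move: (ltn_ord j); move: (nat_of_ord j) => m; rewrite hd ltn0.
Qed.

Lemma normB_scal c u : normB (fun j => c * u j) = Rabs c * normB u.
Proof.
rewrite /normB ipB_scal_l ipB_scal_r -Rmult_assoc -/(Rsqr c).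
by rewrite sqrt_mult ?sqrt_Rsqr_abs //; [apply: Rle_0_sqr | apply: ipB_ge0].
Qed.

Lemma ipB_young lam u v : 0 < lam ->
  ipB u v <= lam / 2 * ipB u u + / (2 * lam) * ipB v v.
Proof.
move=> hl; rewrite /ipB -!sumR_scal -sumR_add; apply: sumR_le => j /=.
have : 0 <= (lam * u j - v j) ^ 2 / (2 * lam).
  by apply: Rmult_le_pos; [apply: pow2_ge_0 | apply/Rlt_le/Rinv_0_lt_compat; lra].
have -> : (lam * u j - v j) ^ 2 / (2 * lam)
        = lam / 2 * (u j * u j) + / (2 * lam) * (v j * v j) - u j * v j by field; lra.
lra.
Qed.

(** Cauchy-Schwarz, from Young's inequality with [lam = (|v| + e) / (|u| + e)]. *)
Lemma cauchy_schwarz u v : ipB u v <= normB u * normB v.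
Proof.
have ha : 0 <= normB u := sqrt_pos _.
have hb : 0 <= normB v := sqrt_pos _.
apply: (le_eps (C := normB u + normB v + 1)) => e [he0 he1].
set a := normB u in ha *; set b := normB v in hb *.
have hlam : 0 < (b + e) / (a + e) by apply: Rdiv_lt_0_compat; lra.
apply: Rle_trans (ipB_young u v hlam) _.
rewrite -(normB_sq u) -(normB_sq v) -/a -/b.
have -> : (b + e) / (a + e) / 2 * (a * a) + / (2 * ((b + e) / (a + e))) * (b * b)
        = (a + e) * (b + e)
          - ((b + e) * ((a + e) ^ 2 - a * a) / (a + e)
             + (a + e) * ((b + e) ^ 2 - b * b) / (b + e)) / 2 by field; lra.
have : 0 <= (b + e) * ((a + e) ^ 2 - a * a) / (a + e).
  apply: Rmult_le_pos; last by apply/Rlt_le/Rinv_0_lt_compat; lra.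
  apply: Rmult_le_pos; first lra.
  rewrite /= Rmult_1_r; nra.
have : 0 <= (a + e) * ((b + e) ^ 2 - b * b) / (b + e).
  apply: Rmult_le_pos; last by apply/Rlt_le/Rinv_0_lt_compat; lra.
  apply: Rmult_le_pos; first lra.
  rewrite /= Rmult_1_r; nra.
nra.
Qed.

Definition pathB a dd (t : R) : Blk d := fun j => a j + t * dd j.

Lemma pathB0 a dd : pathB a dd 0 = a.
Proof. by apply: functional_extensionality => j; rewrite /pathB; ring. Qed.

Lemma subB_pathB a dd t1 t0 :
  subB (pathB a dd t1) (pathB a dd t0) = fun j => (t1 - t0) * dd j.
Proof. by apply: functional_extensionality => j; rewrite /subB /pathB; ring. Qed.

Lemma deriv_along_path (f : Blk d -> R) gf a dd t0 : has_gradient f gf ->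
  derivable_pt_lim (fun t => f (pathB a dd t)) t0 (ipB (gf (pathB a dd t0)) dd).
Proof.
move=> hg eps heps /=.
have hn : 0 <= normB dd := sqrt_pos _.
set n := normB dd in hn *.
set e := eps / (n + 1).
have he : 0 < e by apply: Rdiv_lt_0_compat; lra.
have hen : e * (n + 1) = eps by rewrite /e; field; lra.
have [del [hdel Hd]] := hg (pathB a dd t0) e he.
have hdel' : 0 < del / (n + 1) by apply: Rdiv_lt_0_compat; lra.
exists (mkposreal _ hdel') => h hh0 /= hh.
have hstep : subB (pathB a dd (t0 + h)) (pathB a dd t0) = fun j => h * dd j.
  by rewrite subB_pathB; have -> : t0 + h - t0 = h by ring.
have hah : 0 < Rabs h by apply: Rabs_pos_lt.
have hsmall : Rabs h * n < del.
  have : Rabs h * (n + 1) < del.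
    have := Rmult_lt_compat_r (n + 1) _ _ ltac:(lra) hh.
    by rewrite /Rdiv Rmult_assoc Rinv_l; lra.
  nra.
have := Hd (pathB a dd (t0 + h)); rewrite hstep normB_scal ipB_scal_r -/n.
move=> /(_ hsmall) hb.
have -> : (f (pathB a dd (t0 + h)) - f (pathB a dd t0)) / h - ipB (gf (pathB a dd t0)) dd
        = (f (pathB a dd (t0 + h)) - f (pathB a dd t0) - h * ipB (gf (pathB a dd t0)) dd) / h
  by field.
rewrite /Rdiv Rabs_mult Rabs_inv.
apply: (Rmult_lt_reg_r (Rabs h)) => //.
rewrite Rmult_assoc Rinv_l; last lra.
nra.
Qed.

Lemma descent_lemma (f : Blk d -> R) gf L a y :
  has_gradient f gf -> lipschitz_grad gf L ->
  f y <= f a + ipB (gf a) (subB y a) + L / 2 * ipB (subB y a) (subB y a).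
Proof.
move=> hg hL.
set dd := subB y a; set G := ipB (gf a) dd; set K := ipB dd dd.
pose psi t := f (pathB a dd t) - (G * t + L / 2 * K * (t * t)).
have hquad t : derivable_pt_lim (fun t => G * t + L / 2 * K * (t * t)) t
                 (G + L / 2 * K * (2 * t)).
  rewrite -[G in G + _]Rmult_1_r.
  exact: (derivable_pt_lim_plus _ _ _ _ _
           (derivable_pt_lim_scal _ _ _ _ (derivable_pt_lim_id t))
           (derivable_pt_lim_scal _ _ _ _ (derivable_pt_lim_Rsqr t))).
have hd t : derivable_pt_lim psi t
              (ipB (gf (pathB a dd t)) dd - (G + L / 2 * K * (2 * t))).
  exact: (derivable_pt_lim_minus (fun t => f (pathB a dd t)) _ _ _ _
           (deriv_along_path a dd t hg) (hquad t)).
have [c [hc [hc0 hc1]]] := MVT_cor1 psi 0 1 (fun t => exist _ _ (hd t)) Rlt_0_1.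
have ey : pathB a dd 1 = y.
  by apply: functional_extensionality => j; rewrite /pathB /dd /subB; ring.
move: hc; rewrite /psi ey pathB0 /derive_pt /=.
(* the slope of [psi] is nonpositive: [<grad f(a + c dd) - grad f(a), dd> <= L c |dd|^2] *)
have hslope : ipB (gf (pathB a dd c)) dd - G <= L * c * K.
  rewrite /G -ipB_sub_l; apply: Rle_trans (cauchy_schwarz _ _) _.
  have hn : 0 <= normB dd := sqrt_pos _.
  have hstep : subB (pathB a dd c) a = fun j => c * dd j.
    by apply: functional_extensionality => j; rewrite /subB /pathB; ring.
  have := hL (pathB a dd c) a.
  rewrite hstep normB_scal Rabs_pos_eq; last lra.
  move=> /(Rmult_le_compat_r _ _ _ hn).
  by rewrite /K -normB_sq; nra.
nra.
Qed.

Lemma strong_convexity_lower (f : Blk d -> R) gf mu a y :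
  has_gradient f gf -> strongly_convex f mu ->
  f a + ipB (gf a) (subB y a) + mu / 2 * ipB (subB y a) (subB y a) <= f y.
Proof.
move=> hg hs.
set dd := subB y a; set K := ipB dd dd.
have hd := deriv_along_path a dd 0 hg; rewrite pathB0 in hd.
suff : ipB (gf a) dd <= f y - f a - mu / 2 * K by lra.
apply: (deriv_chord_bound (C := mu / 2 * K) hd) => t ht /=.
have := hs y a t ltac:(lra).
have -> : combB t y a = pathB a dd t.
  by apply: functional_extensionality => j; rewrite /combB /pathB /dd /subB; ring.
rewrite pathB0 /= Rmult_1_r normB_sq -/dd -/K.
lra.
Qed.
End Block.

Section Product.
Variables (N : nat) (nN : 'I_N -> nat).

Definition sum2 (F : forall i : 'I_N, 'I_(nN i) -> R) : R :=
  \sumR_(i : 'I_N) \sumR_(j : 'I_(nN i)) F i j.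

Lemma sum2_add F G : sum2 F + sum2 G = sum2 (fun i j => F i j + G i j).
Proof. by rewrite /sum2 -sumR_add; apply: eq_bigr => i _; rewrite sumR_add. Qed.

Lemma sum2_scal c F : c * sum2 F = sum2 (fun i j => c * F i j).
Proof. by rewrite /sum2 -sumR_scal; apply: eq_bigr => i _; rewrite sumR_scal. Qed.

Lemma sum2_ext F G : (forall i j, F i j = G i j) -> sum2 F = sum2 G.
Proof. by move=> H; apply: eq_bigr => i _; apply: eq_bigr => j _; apply: H. Qed.

Lemma ipX_sum2 (u v : X nN) : ipX u v = sum2 (fun i j => u i j * v i j).
Proof. by []. Qed.

Lemma wnorm2_sum2 (c : 'I_N -> R) (v : X nN) :
  wnorm2 c v = sum2 (fun i j => c i * (v i j * v i j)).
Proof. by apply: eq_bigr => i _; rewrite -sumR_scal. Qed.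

Lemma wnorm2_sub_self (c : 'I_N -> R) (u : X nN) : wnorm2 c (subX u u) = 0.
Proof. by apply: big1 => i _; rewrite ipB_sub_self Rmult_0_r. Qed.

Lemma wnorm2_comb (c : 'I_N -> R) t (w z u : X nN) :
  wnorm2 c (subX (combX t w z) u) =
  t * wnorm2 c (subX w u) + (1 - t) * wnorm2 c (subX z u) - t * (1 - t) * wnorm2 c (subX w z).
Proof.
rewrite !wnorm2_sum2 !sum2_scal.
have -> : forall A B C : R, A + B - C = A + B + (-1) * C by move=> *; ring.
by rewrite sum2_scal !sum2_add; apply: sum2_ext => i j; rewrite /subX /subB /combX /combB; ring.
Qed.

Lemma prox_three_point (dom : X nN -> Prop) (g : X nN -> R) (c : 'I_N -> R) (u z w : X nN) :
  G_convex dom g -> in_prox dom g c u z -> dom w ->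
  g z + / 2 * wnorm2 c (subX z u) + / 2 * wnorm2 c (subX w z)
    <= g w + / 2 * wnorm2 c (subX w u).
Proof.
move=> hconv [hz hmin] hw.
set K := wnorm2 c (subX w z).
apply: (le_eps (C := / 2 * K)) => t [ht0 ht1].
have [hdt hgt] := hconv w z t hw hz ltac:(lra).
have := hmin _ hdt; rewrite wnorm2_comb -/K => hprox.
apply: (Rmult_le_reg_l t) => //.
lra.
Qed.
End Product.

Lemma Rinf_min (S : R -> Prop) v : S v -> (forall y, S y -> v <= y) -> Rinf S = v.
Proof.
move=> hv hlb.
have [h1 h2] := epsilon_spec (inhabits 0) (is_glb S) (ex_intro _ v (conj hlb (fun u hu => hu v hv))).
by apply: Rle_antisym; [apply: h1 | apply: h2].
Qed.

(** Scalar form of the error bound: completing the square in [u]. *)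
Lemma error_bound_scalar gam mu n u dd : 0 < gam -> 0 < mu -> 0 < n ->
  (/ (2 * gam) - mu / (2 * n)) * (u * u) - / 2 * (/ gam * ((u - dd) * (u - dd)))
  <= (n - gam * mu) / (gam ^ 2 * mu) / 2 * (dd * dd).
Proof.
move=> h1 h2 h3.
have : 0 <= (mu / (2 * n) * u - dd / (2 * gam)) ^ 2 * (2 * n / mu).
  by apply: Rmult_le_pos; [apply: pow2_ge_0 | apply/Rlt_le/Rdiv_lt_0_compat; lra].
have -> : (mu / (2 * n) * u - dd / (2 * gam)) ^ 2 * (2 * n / mu)
  = (n - gam * mu) / (gam ^ 2 * mu) / 2 * (dd * dd)
    - ((/ (2 * gam) - mu / (2 * n)) * (u * u) - / 2 * (/ gam * ((u - dd) * (u - dd))))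
  by field; lra.
lra.
Qed.

Lemma sum_over_random_subset (I : finType) (D : {set I} -> R) (a : I -> R) :
  \sumR_(A : {set I}) (D A * \sumR_(i : I) (if i \in A then a i else 0))
  = \sumR_(i : I) (a i * \sumR_(A : {set I}) (if i \in A then D A else 0)).
Proof.
rewrite (eq_bigr (fun A => \sumR_(i : I) (D A * (if i \in A then a i else 0))));
  last by move=> A _; rewrite sumR_scal.
rewrite exchange_big; apply: eq_bigr => i _.
by rewrite -sumR_scal; apply: eq_bigr => A _; case: (i \in A); ring.
Qed.

Section Expectation.
Variables (N : nat) (D : history N -> {set 'I_N} -> R).
Hypothesis hD0 : forall h A, 0 <= D h A.

Lemma Exp_mono k (G1 G2 : history N -> R) h :
  (forall h, G1 h <= G2 h) -> Exp D k G1 h <= Exp D k G2 h.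
Proof.
move=> H; elim: k h => [|k IH] h /=; first exact: H.
by apply: sumR_le => A; apply: Rmult_le_compat_l => //; apply: IH.
Qed.

Lemma Exp_scal k c (G : history N -> R) h :
  Exp D k (fun h => c * G h) h = c * Exp D k G h.
Proof.
elim: k h => [|k IH] h //=.
by rewrite -sumR_scal; apply: eq_bigr => A _; rewrite IH; ring.
Qed.

Lemma Exp_zero k (G : history N -> R) h : (forall h, G h = 0) -> Exp D k G h = 0.
Proof.
move=> H; elim: k h => [|k IH] h /=; first exact: H.
by apply: big1 => A _; rewrite IH; ring.
Qed.

Lemma Exp_geometric k c (V : history N -> R) h : 0 <= 1 - c ->
  (forall h, \sumR_(A : {set 'I_N}) (D h A * V (A :: h)) <= (1 - c) * V h) ->
  Exp D k V h <= (1 - c) ^ k * V h.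
Proof.
move=> hc H; elim: k h => [|k IH] h /=; first lra.
have hq : 0 <= (1 - c) ^ k by apply: pow_le.
apply: Rle_trans (_ : \sumR_(A : {set 'I_N}) ((1 - c) ^ k * (D h A * V (A :: h))) <= _).
  apply: sumR_le => A; rewrite -Rmult_assoc (Rmult_comm _ (D h A)) Rmult_assoc.
  exact: Rmult_le_compat_l (hD0 h A) (IH (A :: h)).
rewrite sumR_scal; apply: Rle_trans (Rmult_le_compat_l _ _ _ hq (H h)) _; right; ring.
Qed.
End Expectation.

Lemma foldr_min_le (T : eqType) (F : T -> R) y r t :
  t \in y :: r -> foldr Rmin (F y) (map F r) <= F t.
Proof.
elim: r t => [|x r IH] t /=; first by rewrite inE => /eqP ->; lra.
rewrite !inE => /orP [/eqP ->|/orP [/eqP ->| ht]].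
- by apply: Rle_trans (Rmin_r _ _) _; apply: IH; rewrite inE eqxx.
- exact: Rmin_l.
- by apply: Rle_trans (Rmin_r _ _) _; apply: IH; rewrite inE ht orbT.
Qed.

Lemma foldr_max_ge (T : eqType) (F : T -> R) y r t :
  t \in y :: r -> F t <= foldr Rmax (F y) (map F r).
Proof.
elim: r t => [|x r IH] t /=; first by rewrite inE => /eqP ->; lra.
rewrite !inE => /orP [/eqP ->|/orP [/eqP ->| ht]].
- by apply: Rle_trans (Rmax_r _ _); apply: IH; rewrite inE eqxx.
- exact: Rmax_l.
- by apply: Rle_trans (Rmax_r _ _); apply: IH; rewrite inE ht orbT.
Qed.

Lemma foldr_min_attained (T : Type) (F : T -> R) y r : exists t, foldr Rmin (F y) (map F r) = F t.
Proof.
elim: r => [|x r [t IH]] /=; first by exists y.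
by rewrite IH /Rmin; case: Rle_dec => _; eexists.
Qed.

Lemma minI_le N (a : 'I_N -> R) i : minI a <= a i.
Proof.
have : i \in enum 'I_N by rewrite mem_enum.
by rewrite /minI; case: (enum 'I_N) => [|y r] //= hi; apply: foldr_min_le.
Qed.

Lemma maxI_ge N (a : 'I_N -> R) i : a i <= maxI a.
Proof.
have : i \in enum 'I_N by rewrite mem_enum.
by rewrite /maxI; case: (enum 'I_N) => [|y r] //= hi; apply: foldr_max_ge.
Qed.

Lemma minI_pos N (a : 'I_N -> R) : (0 < N)%nat -> (forall i, 0 < a i) -> 0 < minI a.
Proof.
move=> hN ha.
have : Ordinal hN \in enum 'I_N by rewrite mem_enum.
rewrite /minI; case: (enum 'I_N) => [|y r] //= _.
by have [t ->] := foldr_min_attained a y r; apply: ha.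
Qed.

(** Writing
    [r = sqrt(1 - 1/kappa)], both sides reduce to [r mu / (N (1 - r)^2 s)]. *)
Lemma tuned_parameters_rate (n mu L gam pp s : R) : 0 < n -> 0 < mu -> 1 < L / mu -> 0 < s ->
  gam = n / mu * (1 - sqrt (1 - / (L / mu))) ->
  pp = (sqrt (L / mu) + sqrt (L / mu - 1)) ^ 2 / s ->
  1 / s * ((n - gam * mu) / (gam ^ 2 * mu)) <= (n - gam * L) / n * pp / gam.
Proof.
move=> hn hm hk hs hg hpp.
set k := L / mu in hk hg hpp.
have hL : L = k * mu by rewrite /k; field; lra.
have hik : / k < 1 by apply: (Rmult_lt_reg_l k); [lra | rewrite Rinv_r; lra].
have hik0 : 0 < / k by apply: Rinv_0_lt_compat; lra.
set r := sqrt (1 - / k) in hg.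
have hr2 : r * r = 1 - / k by apply: sqrt_sqrt; lra.
have hr0 : 0 <= r := sqrt_pos _.
have hr1 : r < 1 by nra.
have hsk : sqrt k * sqrt k = k by apply: sqrt_sqrt; lra.
have hsk1 : sqrt (k - 1) = sqrt k * r.
  by rewrite /r -sqrt_mult; [congr sqrt; field | |]; lra.
have hw : (sqrt k + sqrt k * r) ^ 2 = k * (1 + r) ^ 2.
  have -> : (sqrt k + sqrt k * r) ^ 2 = sqrt k * sqrt k * (1 + r) ^ 2 by ring.
  by rewrite hsk.
rewrite hsk1 hw in hpp.
have hP : k * (1 - r) * (1 + r) = 1.
  have -> : k * (1 - r) * (1 + r) = k * (1 - r * r) by ring.
  by rewrite hr2; field; lra.
have e1 : (n - gam * L) / n * pp / gam =
    ((1 + r) * (k * (1 - r) * (1 + r)) - (k * (1 - r) * (1 + r)) ^ 2) * mu / (n * (1 - r) ^ 2 * s).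
  by rewrite hpp hg hL; field; repeat split; lra.
have e2 : 1 / s * ((n - gam * mu) / (gam ^ 2 * mu)) = r * mu / (n * (1 - r) ^ 2 * s).
  by rewrite hg; field; repeat split; lra.
rewrite e1 e2 hP; have -> : (1 + r) * 1 - 1 ^ 2 = r by ring.
exact: Rle_refl.
Qed.

Section ForwardBackward.
Variables (N : nat) (nN : 'I_N -> nat)
  (f : forall i : 'I_N, Blk (nN i) -> R)
  (gf : forall i : 'I_N, Blk (nN i) -> Blk (nN i))
  (L mu : 'I_N -> R) (dom : X nN -> Prop) (g : X nN -> R) (gamma : 'I_N -> R).
Hypothesis hN : (0 < N)%nat.
Hypothesis hgrad : forall i, has_gradient (@f i) (@gf i).
Hypothesis hL : forall i, lipschitz_grad (@gf i) (L i).
Hypothesis hGconvex : G_convex dom g.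
Hypothesis hmu : forall i, 0 < mu i.
Hypothesis hsc : forall i, strongly_convex (@f i) (mu i).
Hypothesis hgamma : forall i, 0 < gamma i /\ gamma i * L i < INR N.

Let hNpos : 0 < INR N.
Proof. by apply: lt_0_INR; apply/ltP. Qed.
Let hgam i : 0 < gamma i := proj1 (hgamma i).

Definition model (x w : X nN) : R :=
  Fx f x + ipX (gradF gf x) (subX w x) + g w + / 2 * wnorm2 (Gamma_inv gamma) (subX w x).

Definition model_blk (i : 'I_N) (a w : Blk (nN i)) : R :=
  f a / INR N + ipB (fun j => / INR N * gf a j) (subB w a)
  + / 2 * (/ gamma i * ipB (subB w a) (subB w a)).

Lemma model_split x w : model x w = \sumR_(i : 'I_N) model_blk (x i) (w i) + g w.
Proof.
rewrite /model /Fx /wnorm2 /Gamma_inv -!sumR_scal.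
have -> : forall A B C D : R, A + B + C + D = (A + B + D) + C by move=> *; ring.
rewrite -!sumR_add; congr (_ + _); apply: eq_bigr => i _.
by rewrite /model_blk /Rdiv /gradF /subX; ring.
Qed.

Lemma Phi_split w : PhiR f g w = \sumR_(i : 'I_N) (f (w i) / INR N) + g w.
Proof. by rewrite /PhiR /Fx -sumR_scal; congr (_ + _); apply: eq_bigr => i _; rewrite /Rdiv; ring. Qed.

Lemma model_self x : model x x = PhiR f g x.
Proof.
rewrite /model /PhiR wnorm2_sub_self.
have -> : ipX (gradF gf x) (subX x x) = 0 by apply: big1 => i _; apply: ipB_sub_self.
ring.
Qed.

(** Completing the square: up to terms independent of [w], the model is the
    proximal objective at the forward step [x - Gamma grad F x]. *)
Lemma model_prox_form x w : model x w =
  Fx f x + (g w + / 2 * wnorm2 (Gamma_inv gamma) (subX w (affX x (fun i => - gamma i) (gradF gf x))))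
  - sum2 (fun i j => / 2 * gamma i * (gradF gf x (i:=i) j * gradF gf x (i:=i) j)).
Proof.
rewrite /model ipX_sum2 !wnorm2_sum2 !sum2_scal.
have -> : forall A B C D E F : R, A + B + C + D = A + (C + E) - F <-> B + D + F = E.
  by move=> *; split; lra.
rewrite !sum2_add; apply: sum2_ext => i j.
by rewrite /subX /subB /affX /Gamma_inv; have hg := hgam i; field; lra.
Qed.

(** A step [z in T x] minimizes the model, so [FBE x = model x z]. *)
Lemma model_min x z w : in_T gf dom g gamma x z -> dom w -> model x z <= model x w.
Proof. by move=> [_ hmin] hw; rewrite !model_prox_form; have := hmin w hw; lra. Qed.

Lemma FBE_model x z : in_T gf dom g gamma x z -> FBE f gf dom g gamma x = model x z.
Proof.
move=> hz; apply: Rinf_min; first by exists z; split => //; case: hz.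
by move=> y [w [hw ->]]; apply: model_min.
Qed.

Lemma model_three_point x z w : in_T gf dom g gamma x z -> dom w ->
  model x z + / 2 * wnorm2 (Gamma_inv gamma) (subX w z) <= model x w.
Proof.
move=> hz hw; rewrite !model_prox_form.
by have := prox_three_point hGconvex hz hw; lra.
Qed.

(** [xi_i / (2 gamma_i)]: the guaranteed decrease per unit of squared step. *)
Definition descent_coef (i : 'I_N) : R := / (2 * gamma i) - L i / (2 * INR N).
Definition error_coef (i : 'I_N) : R := (INR N - gamma i * mu i) / (gamma i ^ 2 * mu i).
Definition step2 (x z : X nN) (i : 'I_N) : R := ipB (subB (z i) (x i)) (subB (z i) (x i)).

Lemma descent_coef_ge0 i : 0 <= descent_coef i.
Proof.
have [hg hgl] := hgamma i.
have -> : descent_coef i = (INR N - gamma i * L i) / (2 * gamma i * INR N).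
  by rewrite /descent_coef; field; lra.
by apply/Rlt_le/Rdiv_lt_0_compat; nra.
Qed.

Lemma model_blk_upper i (a w : Blk (nN i)) :
  f w / INR N <= model_blk a w - descent_coef i * ipB (subB w a) (subB w a).
Proof.
have := descent_lemma a w (@hgrad i) (@hL i).
rewrite /model_blk /descent_coef ipB_scal_l => /(Rmult_le_compat_r (/ INR N)).
move=> /(_ (Rlt_le _ _ (Rinv_0_lt_compat _ hNpos))).
have hg := hgam i; rewrite /Rdiv.
set G := ipB (gf a) (subB w a); set K := ipB (subB w a) (subB w a).
have -> : (f a + G + L i / 2 * K) * / INR N = f a * / INR N + / INR N * G
   + / 2 * (/ gamma i * K) - (/ (2 * gamma i) - L i * / (2 * INR N)) * K by field; lra.
lra.
Qed.

Lemma model_blk_lower i (a w : Blk (nN i)) :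
  model_blk a w <= f w / INR N + (/ (2 * gamma i) - mu i / (2 * INR N)) * ipB (subB w a) (subB w a).
Proof.
have := strong_convexity_lower a w (@hgrad i) (@hsc i).
rewrite /model_blk ipB_scal_l => /(Rmult_le_compat_r (/ INR N)).
move=> /(_ (Rlt_le _ _ (Rinv_0_lt_compat _ hNpos))).
have hg := hgam i; rewrite /Rdiv.
set G := ipB (gf a) (subB w a); set K := ipB (subB w a) (subB w a).
have -> : (f a + G + mu i / 2 * K) * / INR N = f a * / INR N + / INR N * G
   + / 2 * (/ gamma i * K) - (/ (2 * gamma i) - mu i * / (2 * INR N)) * K by field; lra.
lra.
Qed.

Lemma Phi_le_model x w : PhiR f g w <= model x w.
Proof.
rewrite Phi_split model_split; apply: Rplus_le_compat_r; apply: sumR_le => i.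
have := model_blk_upper (x i) (w i).
have := Rmult_le_pos _ _ (descent_coef_ge0 i) (ipB_ge0 (subB (w i) (x i))).
lra.
Qed.

Lemma model_update x z A :
  model (update x z A) z
    <= model x z - \sumR_(i : 'I_N) (if i \in A then descent_coef i * step2 x z i else 0).
Proof.
rewrite !model_split.
suff : \sumR_(i : 'I_N) model_blk (update x z A (i:=i)) (z i)
    <= \sumR_(i : 'I_N) (model_blk (x i) (z i) - (if i \in A then descent_coef i * step2 x z i else 0)).
  by rewrite sumR_sub_ord; lra.
apply: sumR_le => i; rewrite /update; case: (i \in A); last lra.
have -> : model_blk (z i) (z i) = f (z i) / INR N by rewrite /model_blk !ipB_sub_self; ring.
by have := model_blk_upper (x i) (z i); rewrite /step2; lra.
Qed.

Lemma FBE_error_bound x z xs : in_T gf dom g gamma x z -> dom xs ->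
  FBE f gf dom g gamma x - PhiR f g xs <= \sumR_(i : 'I_N) (error_coef i / 2 * step2 x z i).
Proof.
move=> hz hxs; rewrite (FBE_model hz).
have h1 := model_three_point hz hxs.
have h2 : model x xs <= \sumR_(i : 'I_N) (f (xs i) / INR N
    + (/ (2 * gamma i) - mu i / (2 * INR N)) * ipB (subB (xs i) (x i)) (subB (xs i) (x i))) + g xs.
  by rewrite model_split; apply: Rplus_le_compat_r; apply: sumR_le => i; apply: model_blk_lower.
rewrite Phi_split sumR_add_ord in h2 *.
suff : \sumR_(i : 'I_N) ((/ (2 * gamma i) - mu i / (2 * INR N))
         * ipB (subB (xs i) (x i)) (subB (xs i) (x i)))
       - / 2 * wnorm2 (Gamma_inv gamma) (subX xs z)
     <= \sumR_(i : 'I_N) (error_coef i / 2 * step2 x z i) by lra.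
rewrite /wnorm2 -sumR_scal -sumR_sub; apply: sumR_le => i.
rewrite /step2 /ipB /subX -!sumR_scal -sumR_sub; apply: sumR_le => j.
have := error_bound_scalar (xs i j - x i j) (z i j - x i j) (hgam i) (hmu i) hNpos.
by rewrite /subB /error_coef /Gamma_inv; have -> : xs i j - x i j - (z i j - x i j) = xs i j - z i j by ring.
Qed.
Lemma Phi_strongly_convex y xs t : dom y -> dom xs -> 0 <= t <= 1 ->
  PhiR f g (combX t y xs) <= t * PhiR f g y + (1 - t) * PhiR f g xs
    - t * (1 - t) / 2 * wnorm2 (fun i => mu i / INR N) (subX y xs).
Proof.
move=> hy hxs ht.
have [_ hgc] := hGconvex hy hxs ht.
have hF : \sumR_(i : 'I_N) (f (combX t y xs (i:=i)) / INR N)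
    <= \sumR_(i : 'I_N) (t * (f (y i) / INR N) + (1 - t) * (f (xs i) / INR N)
         - t * (1 - t) / 2 * (mu i / INR N * ipB (subX y xs (i:=i)) (subX y xs (i:=i)))).
  apply: sumR_le => i.
  have := @hsc i (y i) (xs i) t ht; rewrite /= Rmult_1_r normB_sq => hfi.
  apply: Rle_trans (Rmult_le_compat_r _ _ _ (Rlt_le _ _ (Rinv_0_lt_compat _ hNpos)) hfi) _.
  by right; rewrite /subX /Rdiv; field; lra.
rewrite sumR_sub_ord sumR_add_ord !sumR_scal_ord in hF.
rewrite !Phi_split /wnorm2; lra.
Qed.

Lemma quadratic_growth xs y : dom xs -> (forall x, dom x -> PhiR f g xs <= PhiR f g x) ->
  dom y -> / 2 * wnorm2 (fun i => mu i / INR N) (subX y xs) <= PhiR f g y - PhiR f g xs.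
Proof.
move=> hxs hmin hy.
set W := wnorm2 _ _.
apply: (le_eps (C := / 2 * W)) => t [ht0 ht1].
have [hdt _] := hGconvex hy hxs (conj (Rlt_le _ _ ht0) ht1).
have := Phi_strongly_convex hy hxs (conj (Rlt_le _ _ ht0) ht1).
have := hmin _ hdt; rewrite -/W => h1 h2.
apply: (Rmult_le_reg_l t) => //; lra.
Qed.

(** On a nontrivial block, strong convexity and the descent lemma force [mu <= L]. *)
Lemma mu_le_L i : (0 < nN i)%nat -> mu i <= L i.
Proof.
move=> hn.
pose a : Blk (nN i) := fun _ => 0.
pose y : Blk (nN i) := fun _ => 1.
have h1 := descent_lemma a y (@hgrad i) (@hL i).
have h2 := strong_convexity_lower a y (@hgrad i) (@hsc i).
have hK : 1 <= ipB (subB y a) (subB y a).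
  rewrite /ipB (eq_bigr (fun _ => 1)); last by move=> j _; rewrite /subB /y /a; ring.
  by apply: (@sumR_term _ (fun _ => 1) (Ordinal hn)) => _; lra.
nra.
Qed.

Section Algorithm.
Variables (p : 'I_N -> R) (D : history N -> {set 'I_N} -> R)
  (x0 : X nN) (z : history N -> X nN) (xstar : X nN).
Hypothesis hp : forall i, 0 < p i.
Hypothesis hD : sampling_ok D p.
Hypothesis hz : forall h : history N, in_T gf dom g gamma (traj x0 z h) (z h).
Hypothesis hstar : dom xstar /\ forall x, dom x -> PhiR f g xstar <= PhiR f g x.

Let hD0 h A : 0 <= D h A := proj1 (hD h) A.

Definition decrease_rate (i : 'I_N) : R := (INR N - gamma i * L i) / INR N * p i / gamma i.

Definition fbe_gap (h : history N) : R :=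
  FBE f gf dom g gamma (traj x0 z h) - PhiR f g xstar.

Definition block_decrease (h : history N) (i : 'I_N) : R :=
  descent_coef i * step2 (traj x0 z h) (z h) i.

Lemma block_decrease_ge0 h i : 0 <= block_decrease h i.
Proof. exact: Rmult_le_pos (descent_coef_ge0 i) (ipB_ge0 _). Qed.

Lemma fbe_gap_step h A :
  fbe_gap (A :: h) <= fbe_gap h - \sumR_(i : 'I_N) (if i \in A then block_decrease h i else 0).
Proof.
rewrite /fbe_gap (FBE_model (hz (A :: h))) (FBE_model (hz h)).
have hzh : dom (z h) by case: (hz h).
have := model_min (hz (A :: h)) hzh.
have -> : traj x0 z (A :: h) = update (traj x0 z h) (z h) A by [].
have := model_update (traj x0 z h) (z h) A.
rewrite /block_decrease; lra.
Qed.

(** In conditional expectation, block [i] is updated with probability [>= p i]. *)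
Lemma expected_fbe_gap h :
  \sumR_(A : {set 'I_N}) (D h A * fbe_gap (A :: h))
    <= fbe_gap h - \sumR_(i : 'I_N) (p i * block_decrease h i).
Proof.
have [_ [hsum hmarg]] := hD h.
have hstep : \sumR_(A : {set 'I_N}) (D h A * fbe_gap (A :: h))
    <= \sumR_(A : {set 'I_N}) (D h A * (fbe_gap h
          - \sumR_(i : 'I_N) (if i \in A then block_decrease h i else 0))).
  by apply: sumR_le => A; apply: Rmult_le_compat_l (hD0 h A) (fbe_gap_step h A).
have hmean : \sumR_(A : {set 'I_N}) (D h A * (fbe_gap h
          - \sumR_(i : 'I_N) (if i \in A then block_decrease h i else 0)))
    = fbe_gap h - \sumR_(i : 'I_N) (block_decrease h i
          * \sumR_(A : {set 'I_N}) (if i \in A then D h A else 0)).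
  rewrite (eq_bigr (fun A => fbe_gap h * D h A
             - D h A * \sumR_(i : 'I_N) (if i \in A then block_decrease h i else 0)));
    last by move=> A _; ring.
  by rewrite sumR_sub sumR_scal hsum sum_over_random_subset Rmult_1_r.
have hprob : \sumR_(i : 'I_N) (p i * block_decrease h i)
    <= \sumR_(i : 'I_N) (block_decrease h i
          * \sumR_(A : {set 'I_N}) (if i \in A then D h A else 0)).
  apply: sumR_le => i; rewrite Rmult_comm.
  exact: Rmult_le_compat_l (block_decrease_ge0 h i) (hmarg i).
lra.
Qed.

Lemma decrease_dominates_error c h : 0 <= c ->
  (forall i, (0 < nN i)%nat -> c * error_coef i <= decrease_rate i) ->
  c * (\sumR_(i : 'I_N) (error_coef i / 2 * step2 (traj x0 z h) (z h) i))
    <= \sumR_(i : 'I_N) (p i * block_decrease h i).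
Proof.
move=> hc hcb; rewrite -sumR_scal; apply: sumR_le => i.
rewrite /block_decrease /step2.
case: (posnP (nN i)) => hn.
  by rewrite ipB_dim0 //; lra.
have hK := ipB_ge0 (subB (z h (i:=i)) (traj x0 z h (i:=i))).
have := hcb i ltac:(by rewrite hn).
have -> : decrease_rate i = 2 * (p i * descent_coef i).
  by rewrite /decrease_rate /descent_coef; have hg := hgam i; field; lra.
move=> /(Rmult_le_compat_r _ _ _ hK); lra.
Qed.

Lemma fbe_gap_contraction c h : 0 <= c ->
  (forall i, (0 < nN i)%nat -> c * error_coef i <= decrease_rate i) ->
  \sumR_(A : {set 'I_N}) (D h A * fbe_gap (A :: h)) <= (1 - c) * fbe_gap h.
Proof.
move=> hc hcb.
have herr : fbe_gap h <= \sumR_(i : 'I_N) (error_coef i / 2 * step2 (traj x0 z h) (z h) i).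
  exact: FBE_error_bound (hz h) (proj1 hstar).
have := Rmult_le_compat_l _ _ _ hc herr.
have := decrease_dominates_error h hc hcb.
have := expected_fbe_gap h.
lra.
Qed.

Lemma p_le1 i : p i <= 1.
Proof.
have [_ [hs hmarg]] := hD [::].
apply: Rle_trans (hmarg i) _; rewrite -hs; apply: sumR_le => A.
by case: (i \in A); [lra | apply: hD0].
Qed.

(** On a nontrivial block [a_i <= b_i] with [b_i > 0]; hence any admissible [c] is [<= 1]. *)
Lemma error_coef_pos i : (0 < nN i)%nat -> 0 < error_coef i.
Proof.
move=> hn; have hml := mu_le_L hn.
have [hg hgl] := hgamma i; have hm := hmu i.
by apply: Rdiv_lt_0_compat; [nra | apply: Rmult_lt_0_compat => //; apply: pow_lt].
Qed.

Lemma decrease_rate_le_error_coef i : (0 < nN i)%nat -> decrease_rate i <= error_coef i.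
Proof.
move=> hn; have hml := mu_le_L hn.
have [hg hgl] := hgamma i; have hm := hmu i.
have hpi := p_le1 i; have hpp := hp i.
rewrite /decrease_rate /error_coef.
have -> : (INR N - gamma i * L i) / INR N * p i / gamma i
        = (INR N - gamma i * L i) * p i / (INR N * gamma i) by field; lra.
have -> : (INR N - gamma i * mu i) / (gamma i ^ 2 * mu i)
        = (INR N - gamma i * mu i) * (INR N / (gamma i * mu i)) / (INR N * gamma i).
  by rewrite /=; field; lra.
apply: Rmult_le_compat_r; first by apply/Rlt_le/Rinv_0_lt_compat; nra.
have hGM : 0 < gamma i * mu i by nra.
have h1 : 1 <= INR N / (gamma i * mu i).
  apply: (Rmult_le_reg_r (gamma i * mu i)) => //.
  by rewrite /Rdiv Rmult_assoc Rinv_l; nra.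
have hGL : gamma i * mu i <= gamma i * L i by apply: Rmult_le_compat_l; lra.
nra.
Qed.

Lemma rate_le_one c i : (0 < nN i)%nat -> c * error_coef i <= decrease_rate i -> c <= 1.
Proof.
move=> hn hc; have hb := error_coef_pos hn.
have := decrease_rate_le_error_coef hn; nra.
Qed.

Lemma Phi_gap_le_fbe_gap h : PhiR f g (z h) - PhiR f g xstar <= fbe_gap h.
Proof. by rewrite /fbe_gap (FBE_model (hz h)); have := Phi_le_model (traj x0 z h) (z h); lra. Qed.

Lemma fbe_gap_init : dom x0 -> fbe_gap [::] <= PhiR f g x0 - PhiR f g xstar.
Proof.
move=> hx0; rewrite /fbe_gap (FBE_model (hz [::])) /= -(model_self x0).
have hmin : model x0 (z [::]) <= model x0 x0 := model_min (hz [::]) hx0.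
lra.
Qed.

Lemma rates_nondegenerate c : (exists i, (0 < nN i)%nat) -> 0 <= c ->
  (forall i, (0 < nN i)%nat -> c * error_coef i <= decrease_rate i) ->
  BC_rates f gf dom g gamma D x0 z xstar mu c.
Proof.
move=> [i0 hi0] hc hcb.
have hc1 : 0 <= 1 - c by have := rate_le_one hi0 (hcb i0 hi0); lra.
have hPhi : dom x0 -> forall k,
    Exp D k (fun h => PhiR f g (z h) - PhiR f g xstar) [::]
      <= (PhiR f g x0 - PhiR f g xstar) * (1 - c) ^ k.
  move=> hx0 k.
  apply: Rle_trans (Exp_mono hD0 k [::] Phi_gap_le_fbe_gap) _.
  apply: Rle_trans (Exp_geometric hD0 k [::] hc1 (fun h => fbe_gap_contraction h hc hcb)) _.
  by rewrite Rmult_comm; apply: Rmult_le_compat_r; [apply: pow_le | apply: fbe_gap_init].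
split; first by move=> h; apply: fbe_gap_contraction.
split; first exact: hPhi.
move=> hx0 k; rewrite -Exp_scal; apply: Rle_trans (hPhi hx0 k).
apply: Exp_mono => // h.
have hzh : dom (z h) by case: (hz h).
exact: quadratic_growth (proj1 hstar) (proj2 hstar) hzh.
Qed.

(** When every block is trivial, all iterates coincide and the rates hold for any [c]. *)
Lemma rates_degenerate c : (forall i, nN i = 0%nat) -> BC_rates f gf dom g gamma D x0 z xstar mu c.
Proof.
move=> h0.
have all_eq (u v : X nN) : u = v.
  apply: functional_extensionality_dep => i; apply: functional_extensionality => j; exfalso.
  by move: (ltn_ord j); move: (nat_of_ord j) => m; rewrite h0 ltn0.
have hfbe h : FBE f gf dom g gamma (traj x0 z h) = PhiR f g xstar.
  by rewrite (FBE_model (hz h)) (all_eq (traj x0 z h) xstar) (all_eq (z h) xstar) model_self.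
split.
  move=> h; rewrite hfbe big1; first lra.
  by move=> A _; rewrite hfbe; ring.
split=> _ k; rewrite Exp_zero; try by rewrite (all_eq x0 xstar); lra.
  by move=> h; rewrite (all_eq (z h) xstar); ring.
by move=> h; rewrite (all_eq (z h) xstar) wnorm2_sub_self.
Qed.

Lemma BC_rates_of c :
  ((exists i, (0 < nN i)%nat) ->
     0 <= c /\ forall i, (0 < nN i)%nat -> c * error_coef i <= decrease_rate i) ->
  BC_rates f gf dom g gamma D x0 z xstar mu c.
Proof.
move=> hc; case: (pickP (fun i => (0 < nN i)%nat)) => [i0 hi0 | hnone].
  have hex : exists i, (0 < nN i)%nat by exists i0.
  by have [hc0 hcb] := hc hex; apply: rates_nondegenerate.
apply: rates_degenerate => i.
by move/negbT: (hnone i); rewrite lt0n negbK => /eqP.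
Qed.

Lemma min_max_rate_ok : (exists i, (0 < nN i)%nat) ->
  let c := minI decrease_rate / maxI error_coef in
  0 <= c /\ forall i, (0 < nN i)%nat -> c * error_coef i <= decrease_rate i.
Proof.
move=> [i0 hi0] c.
have ha : 0 < minI decrease_rate.
  apply: minI_pos => // i; have [hg hgl] := hgamma i; rewrite /decrease_rate.
  by apply: Rdiv_lt_0_compat => //; apply: Rmult_lt_0_compat => //; apply: Rdiv_lt_0_compat; lra.
have hb : 0 < maxI error_coef := Rlt_le_trans _ _ _ (error_coef_pos hi0) (maxI_ge _ i0).
split; first by apply/Rlt_le/Rdiv_lt_0_compat.
move=> i hi; have hbi := error_coef_pos hi.
have hbmax := maxI_ge error_coef i; have hamin := minI_le decrease_rate i.
have -> : c * error_coef i = minI decrease_rate * (error_coef i / maxI error_coef).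
  by rewrite /c; field; lra.
have : error_coef i / maxI error_coef <= 1.
  apply: (Rmult_le_reg_r (maxI error_coef)) => //.
  by rewrite /Rdiv Rmult_assoc Rinv_l; lra.
nra.
Qed.

Lemma tuned_rate_ok :
  let kappa := fun i => L i / mu i in
  let s := \big[Rplus/R0]_(j : 'I_N) (sqrt (kappa j) + sqrt (kappa j - 1)) ^ 2 in
  (forall i, 1 < kappa i) ->
  (forall i, gamma i = INR N / mu i * (1 - sqrt (1 - / kappa i))) ->
  (forall i, p i = (sqrt (kappa i) + sqrt (kappa i - 1)) ^ 2 / s) ->
  (exists i, (0 < nN i)%nat) ->
  0 <= 1 / s /\ forall i, (0 < nN i)%nat -> 1 / s * error_coef i <= decrease_rate i.
Proof.
move=> kappa s hk hgk hpk [i0 _].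
have hs : 0 < s.
  apply: Rlt_le_trans (_ : 0 < (sqrt (kappa i0) + sqrt (kappa i0 - 1)) ^ 2) _.
    have := sqrt_lt_R0 (kappa i0) ltac:(have := hk i0; lra).
    by have := sqrt_pos (kappa i0 - 1); move=> *; apply: pow_lt; lra.
  by apply: (@sumR_term _ (fun j => (sqrt (kappa j) + sqrt (kappa j - 1)) ^ 2)) => j; apply: pow2_ge_0.
split; first by apply/Rlt_le/Rdiv_lt_0_compat; lra.
move=> i _.
exact: tuned_parameters_rate hNpos (hmu i) (hk i) hs (hgk i) (hpk i).
Qed.
End Algorithm.
End ForwardBackward.

Unset Implicit Arguments. Set Strict Implicit.

Theorem theorem2p7
  (N : nat) (nN : 'I_N -> nat)
  (f : forall i : 'I_N, Blk (nN i) -> R)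
  (gf : forall i : 'I_N, Blk (nN i) -> Blk (nN i))
  (L mu : 'I_N -> R)
  (dom : X nN -> Prop) (g : X nN -> R)
  (gamma p : 'I_N -> R)
  (D : history N -> {set 'I_N} -> R)
  (x0 : X nN) (z : history N -> X nN) (xstar : X nN)
  (hN : (0 < N)%nat)
  (hgrad : forall i, has_gradient (@f i) (@gf i))
  (hL : forall i, lipschitz_grad (@gf i) (L i))
  (hGproper : G_proper dom) (hGlsc : G_lsc dom g) (hGconvex : G_convex dom g)
  (hmu : forall i, 0 < mu i)
  (hsc : forall i, strongly_convex (@f i) (mu i))
  (hgamma : forall i, 0 < gamma i /\ gamma i * L i < INR N)
  (hp : forall i, 0 < p i)
  (hD : sampling_ok D p)
  (hz : forall h : history N, in_T gf dom g gamma (traj x0 z h) (z h))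
  (hstar : dom xstar /\ forall x, dom x -> PhiR f g xstar <= PhiR f g x) :
  let c := minI (fun i => (INR N - gamma i * L i) / INR N * p i / gamma i)
           / maxI (fun i => (INR N - gamma i * mu i) / (gamma i ^ 2 * mu i)) in
  BC_rates f gf dom g gamma D x0 z xstar mu c /\
  (let kappa := fun i => L i / mu i in
   let s := \big[Rplus/R0]_(j : 'I_N) (sqrt (kappa j) + sqrt (kappa j - 1)) ^ 2 in
   (forall i, 1 < kappa i) ->
   (forall i, gamma i = INR N / mu i * (1 - sqrt (1 - / kappa i))) ->
   (forall i, p i = (sqrt (kappa i) + sqrt (kappa i - 1)) ^ 2 / s) ->
   BC_rates f gf dom g gamma D x0 z xstar mu (1 / s)).
Proof.
have rates := BC_rates_of hN hgrad hL hGconvex hmu hsc hgamma hp hD hz hstar.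
move=> c; split.
  by apply: rates => hex; apply: (min_max_rate_ok hN hgrad hL hmu hsc hgamma hp hex).
move=> kappa s hk hgk hpk.
by apply: rates => hex; apply: (tuned_rate_ok hN hmu hk hgk hpk hex).
Qed.
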